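(* Let $r\in\mathbb{N}_0$, $s\in\mathbb{N}$, and let $I,J$ be finite sets with $|I|=r$, $|J|=r+s$. Let $n\in\mathbb{N}$ (so $n\ge1$) and $A=(a_{i,j})\in\mathbb{N}_0^{I\times J}$ with $\sum_{j\in J}a_{i,j}\le n$ for all $i\in I$, and suppose exactly $u$ rows of $A$ have exactly one non-zero entry. Then $$\min\{\|\mathbf{v}\|_\infty\mid \mathbf{0}\neq\mathbf{v}\in\ker(A)\cap\mathbb{Z}^J\}\ \le\ \left\lfloor n^{\frac{r-u}{s}}\right\rfloor,$$ where $\ker(A)$ is the kernel of the linear map $\mathbb{Q}^J\to\mathbb{Q}^I$ given by $A$ and $\|\mathbf{v}\|_\infty=\max_j|v_j|$ (in particular, the set on the left is non-empty). *)

From HB Require Import structures.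
From mathcomp Require Import all_boot all_order all_algebra.
From mathcomp Require Import all_classical all_reals all_analysis.
Set Implicit Arguments. Unset Strict Implicit. Unset Printing Implicit Defensive.

From HB Require Import structures.
From mathcomp Require Import all_boot all_order all_algebra.
From mathcomp Require Import all_classical all_reals all_analysis.
From mathcomp Require Import zify.
Set Implicit Arguments. Unset Strict Implicit. Unset Printing Implicit Defensive.
Import Order.TTheory GRing.Theory Num.Theory.
Local Open Scope ring_scope.

(* Siegel's lemma by pigeonhole: a matrix with row sums at most n maps the
   (H+1)^c vectors with entries in [0, H] on c columns to at most (nH+1)^d
   vectors on its d rows, so if (nH+1)^d < (H+1)^c two of them collide and
   their difference is a non-zero kernel vector of norm at most H.  A row with
   a single non-zero entry forces that coordinate to vanish, so the u such rows
   can be dropped together with the at most u columns they meet.  For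
   H = floor(n^((r-u)/s)) we have n^(r-u) < (H+1)^s, whence
   (nH+1)^(r-u) < (H+1)^(r-u+s). *)

Lemma leq_card_bigcup (I T : finType) (P : pred I) (F : I -> {set T}) :
  (#|\bigcup_(i | P i) F i| <= \sum_(i | P i) #|F i|)%N.
Proof.
apply: (big_ind2 (fun (A : {set T}) m => #|A| <= m)%N) => //.
- by rewrite cards0.
- move=> A m B k leAm leBk.
  by apply: leq_trans (leq_card_setU A B) _; apply: leq_add.
Qed.

Lemma powR_divX (R : realType) (x : R) (k s : nat) : 0 <= x -> (0 < s)%N ->
  (x `^ (k%:R / s%:R)) ^+ s = x ^+ k.
Proof.
move=> x_ge0 s_gt0; rewrite -powR_mulrn ?powR_ge0 // -powRrM.
by rewrite divfK ?pnatr_eq0 -?lt0n // powR_mulrn.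
Qed.

Lemma expn_lt_truncn_root (R : realType) (n k s : nat) : (0 < s)%N ->
  (n ^ k < (Num.truncn ((n%:R : R) `^ (k%:R / s%:R))).+1 ^ s)%N.
Proof.
move=> s_gt0; rewrite -(ltr_nat R) !natrX -(powR_divX _ (ler0n _ n) s_gt0).
by rewrite ltrXn2r -?lt0n ?powR_ge0 ?truncnS_gt.
Qed.

Lemma ltn_pigeonhole_exp (n H k s : nat) : (0 < n)%N ->
  (n ^ k < H.+1 ^ s)%N -> ((n * H).+1 ^ k < H.+1 ^ (k + s))%N.
Proof.
move=> n_gt0; case: k => [|k] lt_nk; first by rewrite add0n.
have le_nH : ((n * H).+1 <= n * H.+1)%N by nia.
rewrite -(leq_exp2r _ _ (ltn0Sn k)) in le_nH.
apply: leq_ltn_trans le_nH _; rewrite expnMn expnD mulnC.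
by rewrite ltn_pmul2l ?expn_gt0.
Qed.

Section Siegel.

Variables (I J : finType) (a : I -> J -> nat) (n H : nat).
Hypothesis row_sum_le : forall i, (\sum_j a i j <= n)%N.

Variables (D : {set I}) (C : {set J}).

Definition zext (y : {ffun {j | j \in C} -> 'I_H.+1}) (j : J) : nat :=
  if insub j is Some j' then nat_of_ord (y j') else 0%N.

Lemma zext_le y j : (zext y j <= H)%N.
Proof. by rewrite /zext; case: insubP => // j' _ _; rewrite -ltnS. Qed.

Lemma zext_out y j : j \notin C -> zext y j = 0%N.
Proof. by move=> jC; rewrite /zext insubN. Qed.

Lemma row_zext_le y i : (\sum_j a i j * zext y j <= n * H)%N.
Proof.
apply: leq_trans (leq_mul (row_sum_le i) (leqnn H)); rewrite big_distrl.
by apply: leq_sum => j _; rewrite leq_mul ?zext_le.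
Qed.

Definition row_image (y : {ffun {j | j \in C} -> 'I_H.+1}) :
    {ffun {i | i \in D} -> 'I_(n * H).+1} :=
  [ffun i => inord (\sum_j a (val i) j * zext y j)].

Lemma siegel_supported : ((n * H).+1 ^ #|D| < H.+1 ^ #|C|)%N ->
  exists v : J -> int,
    [/\ exists j, v j != 0, forall i, i \in D -> \sum_j (a i j)%:Z * v j = 0,
        forall j, j \notin C -> v j = 0 & forall j, (`|v j| <= H)%N].
Proof.
move=> card_lt.
have /injectivePn [y [z neq_yz eq_img]] : ~~ injectiveb row_image.
  apply: contraTN card_lt => /injectiveP/leq_card.
  by rewrite !card_ffun !card_ord !card_sig -leqNgt.
exists (fun j => (zext y j)%:Z - (zext z j)%:Z); split.
- have [j' neq_j'] : exists j', y j' != z j'.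
    apply/existsP; apply: contraNT neq_yz => /existsPn eq_yz.
    by apply/eqP/ffunP => j; apply/eqP/negbNE.
  by exists (val j'); rewrite /zext valK subr_eq0 eqz_nat.
- move=> i iD; have := congr1 (fun f : {ffun {i | i \in D} -> 'I_(n * H).+1} =>
    nat_of_ord (f (Sub i iD))) eq_img.
  rewrite /= !ffunE !inordK ?ltnS ?row_zext_le // => eq_rows.
  under eq_bigr do rewrite mulrBr -!PoszM.
  by rewrite sumrB -!raddf_sum /= eq_rows subrr.
- by move=> j jC; rewrite !zext_out.
- by move=> j; have := zext_le y j; have := zext_le z j; lia.
Qed.

End Siegel.

Theorem lemma5p2 (R : realType) (r s : nat) (I J : finType)
  (hs : (0 < s)%N) (hI : #|I| = r) (hJ : #|J| = (r + s)%N)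
  (n : nat) (hn : (1 <= n)%N) (a : I -> J -> nat)
  (hrow : forall i : I, (\sum_(j : J) a i j <= n)%N)
  (u : nat)
  (hu : #|[set i : I | #|[set j : J | a i j != 0%N]| == 1%N]| = u) :
  exists v : J -> int,
    [/\ exists j : J, v j != 0,
        forall i : I, \sum_(j : J) (a i j)%:Z * v j = 0
      & ((\max_(j : J) `|v j|%N)%:Z
          <= Num.floor ((n%:R : R) `^ ((r%:R - u%:R) / s%:R)))].
Proof.
have le_ur : (u <= r)%N by rewrite -hu -hI max_card.
rewrite -natrB //; set x := _ `^ _; set H := Num.truncn x.
have floor_x : Num.floor x = H%:Z.
  by rewrite /H truncn_floor powR_ge0 gez0_abs // floor_ge0 powR_ge0.
set S := [set i | _] in hu.
pose K := \bigcup_(i in S) [set j | a i j != 0%N].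
have card_K : (#|K| <= u)%N.
  apply: leq_trans (leq_card_bigcup _ _) _; rewrite -hu -sum1_card.
  by apply: leq_sum => i; rewrite inE => /eqP ->.
have card_pigeon : ((n * H).+1 ^ #|~: S| < H.+1 ^ #|~: K|)%N.
  have -> : #|~: S| = (r - u)%N by have := cardsC S; rewrite hI hu; lia.
  apply: leq_trans (ltn_pigeonhole_exp hn (@expn_lt_truncn_root R n (r - u) s hs)) _.
  by rewrite leq_pexp2l //; have := cardsC K; rewrite hJ; lia.
have [v [nz_v row_v out_v le_v]] := siegel_supported hrow card_pigeon.
exists v; split => // [i|].
- have [iS|] := boolP (i \in S); last by move=> iS; apply: row_v; rewrite inE.
  apply: big1 => j _; have [->|aij] := eqVneq (a i j) 0%N; first by rewrite mul0r.
  by rewrite out_v ?mulr0 // inE negbK; apply/finset.bigcupP; exists i; rewrite // inE.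
- by rewrite floor_x lez_nat; apply/bigmax_leqP.
Qed.
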